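(* (1) There exists a sequent that is not cut-free provable in $\mathtt{GTPDL}$ but is cut-free provable in $\mathtt{CGTPDL}$; moreover, there exists a sequent that is not Fischer–Ladner-cut provable in $\mathtt{GTPDL}$ but is cut-free provable in $\mathtt{CGTPDL}$. (2) There exists a sequent that is provable in both $\mathtt{GTPDL}$ and $\mathtt{CGTPDL}$, but is cut-free provable in neither.
   Context: $\mathtt{TPDL}$ formulas/programs over sets $\mathsf{Prop}$, $\mathsf{AtProg}$: $\varphi ::= \bot \mid p \mid (\varphi\to\varphi) \mid [\pi]\varphi \mid [\pi]^{\leftarrow}\varphi$, $\pi ::= \alpha \mid \pi;\pi \mid \pi\cup\pi \mid \pi^{*} \mid \varphi?$. $[\pi]\Gamma=\{[\pi]\varphi:\varphi\in\Gamma\}$, similarly $[\pi]^{\leftarrow}\Gamma$. A sequent is a pair $\Gamma\Rightarrow\Delta$ of finite sets of formulas. Common rules (premises / conclusion): (Ax) / $\Gamma\Rightarrow\Delta$, $\Gamma\cap\Delta\neq\emptyset$; ($\bot$) / $\Gamma,\bot\Rightarrow\Delta$; ($\to$L) $\Gamma\Rightarrow\varphi,\Delta$ and $\Gamma,\psi\Rightarrow\Delta$ / $\Gamma,\varphi\to\psi\Rightarrow\Delta$; ($\to$R) $\Gamma,\varphi\Rightarrow\psi,\Delta$ / $\Gamma\Rightarrow\varphi\to\psi,\Delta$; (Wk) $\Gamma\Rightarrow\Delta$ / $\Gamma'\Rightarrow\Delta'$, $\Gamma\subseteq\Gamma'$, $\Delta\subseteq\Delta'$; (Cut) $\Gamma\Rightarrow\varphi,\Delta$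 and $\Gamma,\varphi\Rightarrow\Delta$ / $\Gamma\Rightarrow\Delta$ ($\varphi$ is the cut formula); ($[\,]$) $\Gamma\Rightarrow\varphi,[\pi]^{\leftarrow}\Delta$ / $[\pi]\Gamma\Rightarrow[\pi]\varphi,\Delta$; ($[\,]^{\leftarrow}$) $\Gamma\Rightarrow\varphi,[\pi]\Delta$ / $[\pi]^{\leftarrow}\Gamma\Rightarrow[\pi]^{\leftarrow}\varphi,\Delta$; ($[;]$L) $\Gamma,[\pi_0][\pi_1]\varphi\Rightarrow\Delta$ / $\Gamma,[\pi_0;\pi_1]\varphi\Rightarrow\Delta$; ($[;]$R) $\Gamma\Rightarrow[\pi_0][\pi_1]\varphi,\Delta$ / $\Gamma\Rightarrow[\pi_0;\pi_1]\varphi,\Delta$; ($[\cup]$L) $\Gamma,[\pi_0]\varphi,[\pi_1]\varphi\Rightarrow\Delta$ / $\Gamma,[\pi_0\cup\pi_1]\varphi\Rightarrow\Delta$; ($[\cup]$R) $\Gamma\Rightarrow\Delta,[\pi_0]\varphi$ and $\Gamma\Rightarrow\Delta,[\pi_1]\varphi$ / $\Gamma\Rightarrow[\pi_0\cup\pi_1]\varphi,\Delta$; ($[*]$L) $\Gamma,\varphi,[\pi][\pi^*]\varphi\Rightarrow\Delta$ / $\Gamma,[\pi^*]\varphi\Rightarrow\Delta$; ($[?]$L) $\Gamma\Rightarrow\varphi,\Delta$ and $\Gamma,\psi\Rightarrow\Delta$ / $\Gamma,[\varphi?]\psi\Rightarrow\Delta$; ($[?]$R) $\Gamma,\varphi\Rightarrow\psi,\Delta$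 / $\Gamma\Rightarrow[\varphi?]\psi,\Delta$. $\mathtt{GTPDL}$ adds ($[*]$R) $\Gamma,\varphi\Rightarrow[\pi]\varphi$ / $[\pi^*]\Gamma,\varphi\Rightarrow[\pi^*]\varphi$; its proofs are finite trees of rule instances with all leaves Ax/$\bot$. $\mathtt{CGTPDL}$ instead adds (C-s) $\Gamma\Rightarrow\varphi,\Delta$ and $\Gamma\Rightarrow[\pi][\pi^*]\varphi,\Delta$ / $\Gamma\Rightarrow[\pi^*]\varphi,\Delta$; its proofs are finite trees of rule instances whose leaves are Ax/$\bot$ instances or buds, each bud assigned a companion (an inner node with the same sequent), such that in the graph identifying buds with companions every infinite path has a tail followed by a trace with infinitely many progress points. Here a trace along a path $(\Gamma_i\Rightarrow\Delta_i)$ is a sequence $\tau_i\in\Delta_i$ which at ($\to$R), ($[;]$R), ($[\cup]$R), ($[?]$R), (C-s) either stays the same or passes from the principal formula to its component in the chosen premise ($\psi$ for $\varphi\to\psi$; $[\pi_0][\pi_1]\varphi$; $[\pi_j]\varphi$; $\psi$ for $[\varphi?]\psi$; $\varphi$ or $[\pi][\pi^*]\varphi$ for $[\pi^*]\varphi$, the latter a progress point), at ($[\,]$)/($[\,]^{\leftarrow}$) passes from the principal $[\pi]\varphi$/$[\pi]^{\leftarrow}\varphi$ to $\varphi$, and otherwise stays the same. A proof is cut-free if it contains no instance of Cut. The Fischer–Ladner closure $\mathrm{FL}(\Lambda)$ of a set of formulas: $\mathrm{FL}(\bot)=\{\bot\}$, $\mathrm{FL}(p)=\{p\}$, $\mathrm{FL}(\psi_0\to\psi_1)=\{\psi_0\to\psi_1\}\cup\mathrm{FL}(\psi_0)\cup\mathrm{FL}(\psi_1)$,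 $\mathrm{FL}([\pi]\psi)=\mathrm{FL}_\Box([\pi]\psi)\cup\mathrm{FL}(\psi)$, $\mathrm{FL}([\pi]^{\leftarrow}\psi)=\mathrm{FL}_\Box([\pi]^{\leftarrow}\psi)\cup\mathrm{FL}(\psi)$, where $\mathrm{FL}_\Box([\alpha]\psi)=\{[\alpha]\psi\}$, $\mathrm{FL}_\Box([\pi_0;\pi_1]\psi)=\{[\pi_0;\pi_1]\psi\}\cup\mathrm{FL}_\Box([\pi_0][\pi_1]\psi)\cup\mathrm{FL}_\Box([\pi_1]\psi)$, $\mathrm{FL}_\Box([\pi_0\cup\pi_1]\psi)=\{[\pi_0\cup\pi_1]\psi\}\cup\mathrm{FL}_\Box([\pi_0]\psi)\cup\mathrm{FL}_\Box([\pi_1]\psi)$, $\mathrm{FL}_\Box([\pi^*]\psi)=\{[\pi^*]\psi\}\cup\mathrm{FL}_\Box([\pi][\pi^*]\psi)$, $\mathrm{FL}_\Box([\psi_0?]\psi_1)=\{[\psi_0?]\psi_1\}\cup\mathrm{FL}(\psi_0)$, and the backwards versions analogously except $\mathrm{FL}_\Box([\pi_0;\pi_1]^{\leftarrow}\psi)=\{[\pi_0;\pi_1]^{\leftarrow}\psi\}\cup\mathrm{FL}_\Box([\pi_1]^{\leftarrow}[\pi_0]^{\leftarrow}\psi)\cup\mathrm{FL}_\Box([\pi_0]^{\leftarrow}\psi)$; $\mathrm{FL}(\Lambda)=\bigcup_{\varphi\in\Lambda}\mathrm{FL}(\varphi)$. A Cut instance with conclusion $\Gamma\Rightarrow\Delta$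 is a Fischer–Ladner-cut if its cut formula lies in $\mathrm{FL}(\Gamma\cup\Delta)$; a sequent is Fischer–Ladner-cut provable in a system if it has a proof there in which every Cut instance is a Fischer–Ladner-cut. *)

From Stdlib Require Import List Arith.
Import ListNotations.

Inductive formula : Type :=
| FBot : formula
| FVar : nat -> formula
| FImp : formula -> formula -> formula
| FBox : program -> formula -> formula
| FBBox : program -> formula -> formula
with program : Type :=
| PAtom : nat -> program
| PSeq : program -> program -> program
| PCup : program -> program -> program
| PStar : program -> program
| PTest : formula -> program.

(* A sequent Gamma => Delta of finite sets of formulas, represented by lists
   and always compared up to set equality. *)
Definition sequent : Type := (list formula * list formula)%type.

Definition sameset (l l' : list formula) : Prop := forall x, In x l <-> In x l'.
Definition seqeq (s s' : sequent) : Prop := sameset (fst s) (fst s') /\ sameset (snd s) (snd s').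

Inductive rlabel : Type :=
| RAx | RBot
| RImpL (phi psi : formula) | RImpR (phi psi : formula)
| RWk
| RCut (phi : formula)
| RBox (pi : program) (phi : formula)
| RBBox (pi : program) (phi : formula)
| RSeqL (p0 p1 : program) (phi : formula) | RSeqR (p0 p1 : program) (phi : formula)
| RCupL (p0 p1 : program) (phi : formula) | RCupR (p0 p1 : program) (phi : formula)
| RStarL (pi : program) (phi : formula)
| RTestL (phi psi : formula) | RTestR (phi psi : formula)
| RStarR (pi : program) (phi : formula)
| RCs (pi : program) (phi : formula).

Definition inst (r : rlabel) (ps : list sequent) (c : sequent) : Prop :=
  match r, ps with
  | RAx, [] => exists phi, In phi (fst c) /\ In phi (snd c)
  | RBot, [] => In FBot (fst c)
  | RImpL phi psi, [p1; p2] => exists G D,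
      seqeq c (FImp phi psi :: G, D) /\ seqeq p1 (G, phi :: D) /\ seqeq p2 (psi :: G, D)
  | RImpR phi psi, [p] => exists G D,
      seqeq c (G, FImp phi psi :: D) /\ seqeq p (phi :: G, psi :: D)
  | RWk, [p] => incl (fst p) (fst c) /\ incl (snd p) (snd c)
  | RCut phi, [p1; p2] => exists G D,
      seqeq c (G, D) /\ seqeq p1 (G, phi :: D) /\ seqeq p2 (phi :: G, D)
  | RBox pi phi, [p] => exists G D,
      seqeq c (map (FBox pi) G, FBox pi phi :: D) /\ seqeq p (G, phi :: map (FBBox pi) D)
  | RBBox pi phi, [p] => exists G D,
      seqeq c (map (FBBox pi) G, FBBox pi phi :: D) /\ seqeq p (G, phi :: map (FBox pi) D)
  | RSeqL p0 p1 phi, [p] => exists G D,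
      seqeq c (FBox (PSeq p0 p1) phi :: G, D) /\ seqeq p (FBox p0 (FBox p1 phi) :: G, D)
  | RSeqR p0 p1 phi, [p] => exists G D,
      seqeq c (G, FBox (PSeq p0 p1) phi :: D) /\ seqeq p (G, FBox p0 (FBox p1 phi) :: D)
  | RCupL p0 p1 phi, [p] => exists G D,
      seqeq c (FBox (PCup p0 p1) phi :: G, D) /\ seqeq p (FBox p0 phi :: FBox p1 phi :: G, D)
  | RCupR p0 p1 phi, [q0; q1] => exists G D,
      seqeq c (G, FBox (PCup p0 p1) phi :: D) /\
      seqeq q0 (G, FBox p0 phi :: D) /\ seqeq q1 (G, FBox p1 phi :: D)
  | RStarL pi phi, [p] => exists G D,
      seqeq c (FBox (PStar pi) phi :: G, D) /\
      seqeq p (phi :: FBox pi (FBox (PStar pi) phi) :: G, D)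
  | RTestL phi psi, [p1; p2] => exists G D,
      seqeq c (FBox (PTest phi) psi :: G, D) /\ seqeq p1 (G, phi :: D) /\ seqeq p2 (psi :: G, D)
  | RTestR phi psi, [p] => exists G D,
      seqeq c (G, FBox (PTest phi) psi :: D) /\ seqeq p (phi :: G, psi :: D)
  | RStarR pi phi, [p] => exists G,
      seqeq c (phi :: map (FBox (PStar pi)) G, [FBox (PStar pi) phi]) /\
      seqeq p (phi :: G, [FBox pi phi])
  | RCs pi phi, [q0; q1] => exists G D,
      seqeq c (G, FBox (PStar pi) phi :: D) /\
      seqeq q0 (G, phi :: D) /\ seqeq q1 (G, FBox pi (FBox (PStar pi) phi) :: D)
  | _, _ => False
  end.

Definition is_cut (r : rlabel) : Prop := match r with RCut _ => True | _ => False end.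

Definition common_rule (r : rlabel) : Prop :=
  match r with RStarR _ _ | RCs _ _ => False | _ => True end.
Definition G_rule (r : rlabel) : Prop :=
  match r with RCs _ _ => False | _ => True end.
Definition C_rule (r : rlabel) : Prop :=
  match r with RStarR _ _ => False | _ => True end.

Fixpoint FL (f : formula) : list formula :=
  match f with
  | FBot => [FBot]
  | FVar p => [FVar p]
  | FImp a b => FImp a b :: FL a ++ FL b
  | FBox pi psi => FLbox pi psi ++ FL psi
  | FBBox pi psi => FLbbox pi psi ++ FL psi
  end
with FLbox (pi : program) (psi : formula) : list formula :=
  match pi with
  | PAtom a => [FBox (PAtom a) psi]
  | PSeq p0 p1 => FBox (PSeq p0 p1) psi :: FLbox p0 (FBox p1 psi) ++ FLbox p1 psi
  | PCup p0 p1 => FBox (PCup p0 p1) psi :: FLbox p0 psi ++ FLbox p1 psi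
  | PStar p => FBox (PStar p) psi :: FLbox p (FBox (PStar p) psi)
  | PTest f0 => FBox (PTest f0) psi :: FL f0
  end
with FLbbox (pi : program) (psi : formula) : list formula :=
  match pi with
  | PAtom a => [FBBox (PAtom a) psi]
  | PSeq p0 p1 => FBBox (PSeq p0 p1) psi :: FLbbox p1 (FBBox p0 psi) ++ FLbbox p0 psi
  | PCup p0 p1 => FBBox (PCup p0 p1) psi :: FLbbox p0 psi ++ FLbbox p1 psi
  | PStar p => FBBox (PStar p) psi :: FLbbox p (FBBox (PStar p) psi)
  | PTest f0 => FBBox (PTest f0) psi :: FL f0
  end.

Definition FLset (l : list formula) : list formula := flat_map FL l.

Inductive ptree : Type :=
| PNode : sequent -> rlabel -> list ptree -> ptree
| PBud : sequent -> ptree.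

Definition root_seq (t : ptree) : sequent :=
  match t with PNode s _ _ => s | PBud s => s end.

Fixpoint subtree_at (t : ptree) (a : list nat) : option ptree :=
  match a with
  | [] => Some t
  | k :: a' =>
      match t with
      | PNode _ _ ts => match nth_error ts k with
                        | Some t' => subtree_at t' a'
                        | None => None
                        end
      | PBud _ => None
      end
  end.

Definition locally_correct (allowed : rlabel -> Prop) (t : ptree) : Prop :=
  forall a s r ts, subtree_at t a = Some (PNode s r ts) ->
    allowed r /\ inst r (map root_seq ts) s.

Definition no_buds (t : ptree) : Prop := forall a s, subtree_at t a <> Some (PBud s).
Definition cut_free (t : ptree) : Prop :=
  forall a s r ts, subtree_at t a = Some (PNode s r ts) -> ~ is_cut r.
Definition FL_cuts (t : ptree) : Prop :=
  forall a s phi ts, subtree_at t a = Some (PNode s (RCut phi) ts) ->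
    In phi (FLset (fst s ++ snd s)).

Definition G_proof (t : ptree) : Prop := no_buds t /\ locally_correct G_rule t.
Definition G_provable (S : sequent) : Prop := exists t, G_proof t /\ seqeq (root_seq t) S.
Definition G_cutfree_provable (S : sequent) : Prop :=
  exists t, G_proof t /\ cut_free t /\ seqeq (root_seq t) S.
Definition G_FLcut_provable (S : sequent) : Prop :=
  exists t, G_proof t /\ FL_cuts t /\ seqeq (root_seq t) S.

Definition companions_ok (t : ptree) (comp : list nat -> list nat) : Prop :=
  forall a s, subtree_at t a = Some (PBud s) ->
    exists s' r ts, subtree_at t (comp a) = Some (PNode s' r ts) /\ seqeq s s'.

(* one edge of the graph obtained by identifying buds with their companions:
   from inner node at address a, through its k-th premise, to inner node b *)
Definition edge (t : ptree) (comp : list nat -> list nat) (a : list nat) (k : nat) (b : list nat) : Prop :=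
  exists s r ts c, subtree_at t a = Some (PNode s r ts) /\ nth_error ts k = Some c /\
    match c with
    | PNode _ _ _ => b = a ++ [k]
    | PBud _ => b = comp (a ++ [k])
    end.

Definition passes (r : rlabel) (k : nat) (tau tau' : formula) : Prop :=
  match r, k with
  | RImpR phi psi, 0 => tau = FImp phi psi /\ tau' = psi
  | RSeqR p0 p1 phi, 0 => tau = FBox (PSeq p0 p1) phi /\ tau' = FBox p0 (FBox p1 phi)
  | RCupR p0 p1 phi, 0 => tau = FBox (PCup p0 p1) phi /\ tau' = FBox p0 phi
  | RCupR p0 p1 phi, 1 => tau = FBox (PCup p0 p1) phi /\ tau' = FBox p1 phi
  | RTestR phi psi, 0 => tau = FBox (PTest phi) psi /\ tau' = psi
  | RCs pi phi, 0 => tau = FBox (PStar pi) phi /\ tau' = phi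
  | RCs pi phi, 1 => tau = FBox (PStar pi) phi /\ tau' = FBox pi (FBox (PStar pi) phi)
  | RBox pi phi, 0 => tau = FBox pi phi /\ tau' = phi
  | RBBox pi phi, 0 => tau = FBBox pi phi /\ tau' = phi
  | _, _ => False
  end.

Definition trace_step (r : rlabel) (k : nat) (tau tau' : formula) : Prop :=
  match r with
  | RBox _ _ | RBBox _ _ => passes r k tau tau'
  | _ => tau' = tau \/ passes r k tau tau'
  end.

Definition progress (r : rlabel) (k : nat) (tau tau' : formula) : Prop :=
  match r, k with
  | RCs pi phi, 1 => tau = FBox (PStar pi) phi /\ tau' = FBox pi (FBox (PStar pi) phi)
  | _, _ => False
  end.

Definition inf_path (t : ptree) (comp : list nat -> list nat) (v : nat -> list nat) (k : nat -> nat) : Prop :=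
  forall i, edge t comp (v i) (k i) (v (S i)).

Definition trace_from (t : ptree) (v : nat -> list nat) (k : nat -> nat) (N : nat) (tau : nat -> formula) : Prop :=
  forall i, N <= i ->
    exists s r ts s' r' ts',
      subtree_at t (v i) = Some (PNode s r ts) /\
      subtree_at t (v (S i)) = Some (PNode s' r' ts') /\
      In (tau i) (snd s) /\ In (tau (S i)) (snd s') /\
      trace_step r (k i) (tau i) (tau (S i)).

Definition progresses_infinitely (t : ptree) (v : nat -> list nat) (k : nat -> nat) (tau : nat -> formula) : Prop :=
  forall n, exists i, n <= i /\
    exists s r ts, subtree_at t (v i) = Some (PNode s r ts) /\ progress r (k i) (tau i) (tau (S i)).

Definition global_condition (t : ptree) (comp : list nat -> list nat) : Prop :=
  forall v k, inf_path t comp v k ->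
    exists N tau, trace_from t v k N tau /\ progresses_infinitely t v k tau.

Definition C_proof (t : ptree) (comp : list nat -> list nat) : Prop :=
  locally_correct C_rule t /\ companions_ok t comp /\ global_condition t comp.

Definition C_provable (S : sequent) : Prop :=
  exists t comp, C_proof t comp /\ seqeq (root_seq t) S.
Definition C_cutfree_provable (S : sequent) : Prop :=
  exists t comp, C_proof t comp /\ cut_free t /\ seqeq (root_seq t) S.

(* Both negative results come from one invariant. Call a class of sequents bad if every
   admissible rule instance with a bad conclusion has a bad premise. A bad root then yields an
   infinite path of bad nodes: impossible in a finite GTPDL proof, and impossible in a CGTPDL
   proof as soon as bad sequents have no [pi*]-formula in the succedent, since progress only
   happens at (C-s). Refutable sequents are bad for every sound rule; the other bad sequents
   are those built from a fixed "region" of formulas.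
   For p => [a]~[a^-]~p the region is the sequent itself: without cut only (Wk) and ([ ]) apply,
   and ([ ]) produces the refutable => ~[a^-]~p, [a^-][a]~[a^-]~p. A cut on ~p proves it.
   For [(aa)*]q, [(aa)*][a]r => [a*](~q -> r) the region is a partition of its Fischer-Ladner
   closure into an antecedent and a succedent part, so Fischer-Ladner cuts stay inside; the
   propositional and unfolding rules keep a premise inside, while ([ ]) and ([*]R) lead to
   refutable sequents, the latter because ~q -> r is not invariant under a single a-step.
   Cyclically the sequent is provable: unfold both (aa)*-boxes, take two a-steps through (C-s)
   and return to the root. *)

From Stdlib Require Import List Arith Lia Classical ClassicalEpsilon Relations Bool.
Import ListNotations.

Definition seq_all (PL PR : formula -> Prop) (S : sequent) : Prop :=
  (forall f, In f (fst S) -> PL f) /\ (forall f, In f (snd S) -> PR f).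

Lemma seqeq_refl S : seqeq S S.
Proof. split; intro; reflexivity. Qed.

Lemma seqeq_sym {S S'} : seqeq S S' -> seqeq S' S.
Proof. intros [HL HR]; split; intro f; symmetry; auto. Qed.

Section SequentPredicates.
Context {PL PR : formula -> Prop}.

Lemma seq_all_incl {S S'} :
  incl (fst S') (fst S) -> incl (snd S') (snd S) -> seq_all PL PR S -> seq_all PL PR S'.
Proof. intros HL HR [AL AR]; split; auto. Qed.

Lemma seq_all_impl {PL' PR' : formula -> Prop} S :
  (forall f, PL f -> PL' f) -> (forall f, PR f -> PR' f) -> seq_all PL PR S -> seq_all PL' PR' S.
Proof. intros HL HR [AL AR]; split; auto. Qed.

Lemma seq_all_seqeq {S S'} : seqeq S S' -> seq_all PL PR S -> seq_all PL PR S'.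
Proof. intros [HL HR]; apply seq_all_incl; intros f; [apply HL | apply HR]. Qed.

Lemma seq_all_cons_l f G D : seq_all PL PR (f :: G, D) <-> PL f /\ seq_all PL PR (G, D).
Proof. unfold seq_all; simpl; firstorder congruence. Qed.

Lemma seq_all_cons_r f G D : seq_all PL PR (G, f :: D) <-> PR f /\ seq_all PL PR (G, D).
Proof. unfold seq_all; simpl; firstorder congruence. Qed.

Lemma seq_all_map_l (g : formula -> formula) G D :
  seq_all PL PR (map g G, D) <-> seq_all (fun f => PL (g f)) PR (G, D).
Proof.
  unfold seq_all; simpl; split; intros [AL AR]; split; auto.
  - intros f Hf; apply AL, in_map, Hf.
  - intros f Hf; apply in_map_iff in Hf as (x & <- & Hx); auto.
Qed.

Lemma seq_all_map_r (g : formula -> formula) G D :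
  seq_all PL PR (G, map g D) <-> seq_all PL (fun f => PR (g f)) (G, D).
Proof.
  unfold seq_all; simpl; split; intros [AL AR]; split; auto.
  - intros f Hf; apply AR, in_map, Hf.
  - intros f Hf; apply in_map_iff in Hf as (x & <- & Hx); auto.
Qed.

End SequentPredicates.

Definition region (T F : list formula) : sequent -> Prop := seq_all (fun f => In f T) (fun f => In f F).

Section Semantics.
Variables (W : Type) (R : nat -> W -> W -> Prop) (V : nat -> W -> Prop).

Fixpoint sat (w : W) (f : formula) {struct f} : Prop :=
  match f with
  | FBot => False
  | FVar n => V n w
  | FImp a b => sat w a -> sat w b
  | FBox p a => forall v, rel p w v -> sat v a
  | FBBox p a => forall v, rel p v w -> sat v a
  end
with rel (p : program) {struct p} : W -> W -> Prop :=
  match p with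
  | PAtom n => R n
  | PSeq p0 p1 => fun x y => exists z, rel p0 x z /\ rel p1 z y
  | PCup p0 p1 => fun x y => rel p0 x y \/ rel p1 x y
  | PStar p0 => clos_refl_trans_1n W (rel p0)
  | PTest f0 => fun x y => x = y /\ sat x f0
  end.

Definition refutes (w : W) : sequent -> Prop := seq_all (sat w) (fun f => ~ sat w f).

Lemma sat_box_seq w p0 p1 phi : sat w (FBox (PSeq p0 p1) phi) <-> sat w (FBox p0 (FBox p1 phi)).
Proof. simpl; firstorder. Qed.

Lemma sat_box_cup w p0 p1 phi :
  sat w (FBox (PCup p0 p1) phi) <-> sat w (FBox p0 phi) /\ sat w (FBox p1 phi).
Proof. simpl; firstorder. Qed.

Lemma sat_box_test w phi psi : sat w (FBox (PTest phi) psi) <-> (sat w phi -> sat w psi).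
Proof. simpl; firstorder congruence. Qed.

Lemma sat_box_star w pi phi :
  sat w (FBox (PStar pi) phi) <-> sat w phi /\ sat w (FBox pi (FBox (PStar pi) phi)).
Proof.
  simpl; split.
  - intros H; split; [apply H; constructor | intros v Hwv u Hvu; apply H; econstructor; eauto].
  - intros [H0 H1] v Hwv; inversion Hwv; subst; eauto.
Qed.

Lemma refutes_box_rule w pi phi G D :
  refutes w (map (FBox pi) G, FBox pi phi :: D) -> exists v, refutes v (G, phi :: map (FBBox pi) D).
Proof.
  unfold refutes; rewrite seq_all_cons_r, seq_all_map_l; intros [Hphi [HG HD]].
  apply not_all_ex_not in Hphi as [v Hv]; apply imply_to_and in Hv as [Hwv Hv].
  exists v; rewrite seq_all_cons_r, seq_all_map_r; repeat split; auto.
  - intros g Hg; exact (HG g Hg v Hwv).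
  - intros d Hd Hsat; exact (HD d Hd (Hsat w Hwv)).
Qed.

Lemma refutes_bbox_rule w pi phi G D :
  refutes w (map (FBBox pi) G, FBBox pi phi :: D) -> exists v, refutes v (G, phi :: map (FBox pi) D).
Proof.
  unfold refutes; rewrite seq_all_cons_r, seq_all_map_l; intros [Hphi [HG HD]].
  apply not_all_ex_not in Hphi as [v Hv]; apply imply_to_and in Hv as [Hvw Hv].
  exists v; rewrite seq_all_cons_r, seq_all_map_r; repeat split; auto.
  - intros g Hg; exact (HG g Hg v Hvw).
  - intros d Hd Hsat; exact (HD d Hd (Hsat w Hvw)).
Qed.

(* Along a pi-path from w to a world refuting phi, the last world still satisfying phi
   refutes the premise. *)
Lemma refutes_star_right_rule w pi phi G :
  refutes w (phi :: map (FBox (PStar pi)) G, [FBox (PStar pi) phi]) ->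
  exists v, refutes v (phi :: G, [FBox pi phi]).
Proof.
  unfold refutes; rewrite seq_all_cons_l, seq_all_cons_r, seq_all_map_l.
  intros [Hphi [Hstar [HG _]]]; simpl in Hstar, HG.
  apply not_all_ex_not in Hstar as [u Hu]; apply imply_to_and in Hu as [Hwu Hu].
  induction Hwu as [x | x y u Hxy Hyu IH].
  - contradiction.
  - destruct (classic (sat y phi)) as [Hy | Hy].
    + apply IH; auto; intros g Hg z Hyz; apply (HG g Hg); econstructor; eauto.
    + exists x; rewrite seq_all_cons_l, seq_all_cons_r; repeat split; auto.
      intros g Hg; apply (HG g Hg); constructor.
Qed.

Ltac premise q v Hp := exists q, v; split; [simpl; tauto | apply (seq_all_seqeq (seqeq_sym Hp))].

Lemma refutes_premise r ps c w : inst r ps c -> refutes w c -> exists p v, In p ps /\ refutes v p.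
Proof.
  intros Hi Hw; unfold refutes in *.
  destruct r; destruct ps as [| q1 [| q2 [| q3 ps]]]; simpl in Hi; try contradiction.
  - destruct Hi as (phi & H1 & H2); destruct Hw as [HL HR]; destruct (HR _ H2 (HL _ H1)).
  - destruct Hw as [HL _]; destruct (HL _ Hi).
  - destruct Hi as (G & D & Hc & Hp1 & Hp2); apply (seq_all_seqeq Hc) in Hw.
    rewrite seq_all_cons_l in Hw; destruct Hw as [Himp Hw].
    destruct (classic (sat w phi)).
    + premise q2 w Hp2; rewrite seq_all_cons_l; simpl in Himp; auto.
    + premise q1 w Hp1; rewrite seq_all_cons_r; auto.
  - destruct Hi as (G & D & Hc & Hp); apply (seq_all_seqeq Hc) in Hw.
    rewrite seq_all_cons_r in Hw; destruct Hw as [Himp Hw]; apply imply_to_and in Himp.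
    premise q1 w Hp; rewrite seq_all_cons_l, seq_all_cons_r; tauto.
  - destruct Hi as [H1 H2]; exists q1, w; split; [now left | exact (seq_all_incl H1 H2 Hw)].
  - destruct Hi as (G & D & Hc & Hp1 & Hp2); apply (seq_all_seqeq Hc) in Hw.
    destruct (classic (sat w phi)).
    + premise q2 w Hp2; rewrite seq_all_cons_l; auto.
    + premise q1 w Hp1; rewrite seq_all_cons_r; auto.
  - destruct Hi as (G & D & Hc & Hp); apply (seq_all_seqeq Hc) in Hw.
    destruct (refutes_box_rule _ _ _ _ _ Hw) as [v Hv]; premise q1 v Hp; exact Hv.
  - destruct Hi as (G & D & Hc & Hp); apply (seq_all_seqeq Hc) in Hw.
    destruct (refutes_bbox_rule _ _ _ _ _ Hw) as [v Hv]; premise q1 v Hp; exact Hv.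
  - destruct Hi as (G & D & Hc & Hp); apply (seq_all_seqeq Hc) in Hw.
    rewrite seq_all_cons_l, sat_box_seq in Hw; premise q1 w Hp; rewrite seq_all_cons_l; exact Hw.
  - destruct Hi as (G & D & Hc & Hp); apply (seq_all_seqeq Hc) in Hw.
    rewrite seq_all_cons_r, sat_box_seq in Hw; premise q1 w Hp; rewrite seq_all_cons_r; exact Hw.
  - destruct Hi as (G & D & Hc & Hp); apply (seq_all_seqeq Hc) in Hw.
    rewrite seq_all_cons_l, sat_box_cup in Hw; premise q1 w Hp; rewrite !seq_all_cons_l; tauto.
  - destruct Hi as (G & D & Hc & Hp1 & Hp2); apply (seq_all_seqeq Hc) in Hw.
    rewrite seq_all_cons_r, sat_box_cup in Hw.
    destruct (classic (sat w (FBox p0 phi))).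
    + premise q2 w Hp2; rewrite seq_all_cons_r; tauto.
    + premise q1 w Hp1; rewrite seq_all_cons_r; tauto.
  - destruct Hi as (G & D & Hc & Hp); apply (seq_all_seqeq Hc) in Hw.
    rewrite seq_all_cons_l, sat_box_star in Hw; premise q1 w Hp; rewrite !seq_all_cons_l; tauto.
  - destruct Hi as (G & D & Hc & Hp1 & Hp2); apply (seq_all_seqeq Hc) in Hw.
    rewrite seq_all_cons_l, sat_box_test in Hw.
    destruct (classic (sat w phi)).
    + premise q2 w Hp2; rewrite seq_all_cons_l; tauto.
    + premise q1 w Hp1; rewrite seq_all_cons_r; tauto.
  - destruct Hi as (G & D & Hc & Hp); apply (seq_all_seqeq Hc) in Hw.
    rewrite seq_all_cons_r, sat_box_test in Hw; destruct Hw as [Htest Hw]; apply imply_to_and in Htest.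
    premise q1 w Hp; rewrite seq_all_cons_l, seq_all_cons_r; tauto.
  - destruct Hi as (G & Hc & Hp); apply (seq_all_seqeq Hc) in Hw.
    destruct (refutes_star_right_rule _ _ _ _ Hw) as [v Hv]; premise q1 v Hp; exact Hv.
  - destruct Hi as (G & D & Hc & Hp1 & Hp2); apply (seq_all_seqeq Hc) in Hw.
    rewrite seq_all_cons_r, sat_box_star in Hw.
    destruct (classic (sat w phi)).
    + premise q2 w Hp2; rewrite seq_all_cons_r; tauto.
    + premise q1 w Hp1; rewrite seq_all_cons_r; tauto.
Qed.
End Semantics.

Definition refutable (S : sequent) : Prop := exists W R V (w : W), refutes W R V w S.

Lemma refutable_seqeq S S' : seqeq S S' -> refutable S -> refutable S'.
Proof. intros H (W & R & V & w & Hw); exists W, R, V, w; exact (seq_all_seqeq H Hw). Qed.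

Lemma refutable_premise r ps c : inst r ps c -> refutable c -> exists p, In p ps /\ refutable p.
Proof.
  intros Hi (W & R & V & w & Hw).
  destruct (refutes_premise W R V r ps c w Hi Hw) as (p & v & Hp & Hv).
  exists p; split; [exact Hp | exists W, R, V, v; exact Hv].
Qed.

Fixpoint star_free_formula (f : formula) : bool :=
  match f with
  | FBot | FVar _ => true
  | FImp a b => star_free_formula a && star_free_formula b
  | FBox p a | FBBox p a => star_free_program p && star_free_formula a
  end
with star_free_program (p : program) : bool :=
  match p with
  | PAtom _ => true
  | PSeq p0 p1 | PCup p0 p1 => star_free_program p0 && star_free_program p1
  | PStar _ => false
  | PTest f => star_free_formula f
  end.

Definition star_free : sequent -> Prop :=
  seq_all (fun f => star_free_formula f = true) (fun f => star_free_formula f = true).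

Lemma star_free_premise r ps c p : inst r ps c -> ~ is_cut r -> star_free c -> In p ps -> star_free p.
Proof.
  intros Hi Hcut Hc Hp; unfold star_free in *.
  destruct r; destruct ps as [| q1 [| q2 [| q3 ps]]]; simpl in Hi; try contradiction;
    simpl in Hp; repeat destruct Hp as [<- | Hp]; try contradiction.
  all: try exact (seq_all_incl (proj1 Hi) (proj2 Hi) Hc).
  all: match type of Hi with
       | exists G D, _ => destruct Hi as (G & D & Hcq & Hi)
       | exists G, _ => destruct Hi as (G & Hcq & Hi)
       end; apply (seq_all_seqeq Hcq) in Hc.
  all: repeat match goal with H : _ /\ _ |- _ => destruct H end.
  all: match goal with H : seqeq ?q _ |- seq_all _ _ ?q => apply (seq_all_seqeq (seqeq_sym H)) end.
  all: rewrite ?seq_all_cons_l, ?seq_all_cons_r, ?seq_all_map_l, ?seq_all_map_r in *; simpl in *.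
  all: rewrite ?andb_true_iff in *; repeat match goal with H : _ /\ _ |- _ => destruct H end.
  all: try discriminate; split; try tauto.
  all: eapply seq_all_impl; [| | eassumption]; intro f; rewrite ?andb_true_iff; tauto.
Qed.

Lemma subtree_at_app t a b :
  subtree_at t (a ++ b) = match subtree_at t a with Some t' => subtree_at t' b | None => None end.
Proof.
  revert t; induction a as [| k a IH]; intros t; simpl; auto.
  destruct t as [s r ts | s]; auto; destruct (nth_error ts k); auto.
Qed.

Lemma subtree_at_child t a s r ts k c :
  subtree_at t a = Some (PNode s r ts) -> nth_error ts k = Some c -> subtree_at t (a ++ [k]) = Some c.
Proof. intros Ha Hk; rewrite subtree_at_app, Ha; simpl; rewrite Hk; reflexivity. Qed.

Lemma no_buds_subtree t a x : no_buds t -> subtree_at t a = Some x -> no_buds x.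
Proof. intros Hnb Ha b s Hb; apply (Hnb (a ++ b) s); rewrite subtree_at_app, Ha; exact Hb. Qed.

Fixpoint height (t : ptree) : nat :=
  match t with
  | PNode _ _ ts => S (list_max (map height ts))
  | PBud _ => 0
  end.

Lemma height_child s r ts k c : nth_error ts k = Some c -> height c < height (PNode s r ts).
Proof.
  intros Hk; simpl; apply Nat.lt_succ_r.
  pose proof (proj1 (list_max_le (map height ts) _) (le_n _)) as Hmax.
  rewrite Forall_forall in Hmax; apply Hmax, in_map, (nth_error_In _ _ Hk).
Qed.

Lemma subtree_at_depth t a x : subtree_at t a = Some x -> length a + height x <= height t.
Proof.
  revert t; induction a as [| k a IH]; intros t Ha; simpl in Ha.
  - injection Ha as ->; reflexivity.
  - destruct t as [s r ts | s]; [| discriminate].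
    destruct (nth_error ts k) as [c |] eqn:Hk; [| discriminate].
    pose proof (IH c Ha); pose proof (height_child s r ts k c Hk).
    change (length (k :: a)) with (S (length a)); lia.
Qed.

Section InfinitePaths.
Variables (t : ptree) (comp : list nat -> list nat) (v : nat -> list nat) (k : nat -> nat).
Hypothesis Hpath : inf_path t comp v k.

(* Leaving the current node through an inner child strictly decreases the height of the subtree. *)
Lemma inf_path_avoids_bud_free : forall i x, subtree_at t (v i) = Some x -> ~ no_buds x.
Proof.
  intros i x; remember (height x) as h eqn:Hh; revert i x Hh.
  induction h as [h IH] using (well_founded_induction lt_wf); intros i x Hh Hx Hnb.
  destruct (Hpath i) as (s & r & ts & c & Hs & Hk & Hb); rewrite Hx in Hs; injection Hs as ->.
  destruct c as [s' r' ts' | s'].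
  - apply (IH (height (PNode s' r' ts')) ltac:(subst; exact (height_child _ _ _ _ _ Hk))
             (S i) (PNode s' r' ts') eq_refl).
    + rewrite Hb; exact (subtree_at_child _ _ _ _ _ _ _ Hx Hk).
    + apply (no_buds_subtree _ [k i] _ Hnb); simpl; rewrite Hk; reflexivity.
  - apply (Hnb [k i] s'); simpl; rewrite Hk; reflexivity.
Qed.

End InfinitePaths.

Lemma no_buds_global_condition t comp : no_buds t -> global_condition t comp.
Proof.
  intros Hnb v k Hpath; exfalso.
  destruct (Hpath 0) as (s & r & ts & c & Hs & _).
  exact (inf_path_avoids_bud_free t comp v k Hpath 0 _ Hs (no_buds_subtree _ _ _ Hnb Hs)).
Qed.

Lemma no_buds_companions_ok t comp : no_buds t -> companions_ok t comp.
Proof. intros Hnb a s Hs; destruct (Hnb a s Hs). Qed.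

(* Away from the root every step goes one level deeper, and the depth of a node is bounded. *)
Lemma inf_path_visits_root t v k :
  inf_path t (fun _ => []) v k -> forall n, exists i, n <= i /\ v i = [].
Proof.
  intros Hpath n; apply NNPP; intros Hnot.
  assert (Hdeep : forall j, j <= length (v (n + j))).
  { induction j as [| j IH]; [lia |].
    destruct (Hpath (n + j)) as (s & r & ts & c & _ & _ & Hb); rewrite <- Nat.add_succ_r in Hb.
    destruct c.
    - rewrite Hb, length_app; simpl; lia.
    - destruct Hnot; exists (n + S j); split; [lia | exact Hb]. }
  destruct (Hpath (n + S (height t))) as (s & r & ts & _ & Hs & _).
  pose proof (subtree_at_depth _ _ _ Hs); pose proof (Hdeep (S (height t))); simpl in *; lia.
Qed.

Definition trace_edge (t : ptree) (a : list nat) (k : nat) (b : list nat) (tau tau' : formula) : Prop :=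
  exists s r ts s' r' ts',
    subtree_at t a = Some (PNode s r ts) /\ subtree_at t b = Some (PNode s' r' ts') /\
    In tau (snd s) /\ In tau' (snd s') /\ trace_step r k tau tau'.

Lemma succ_mod j n : S (j mod n) mod n = S j mod n.
Proof. rewrite <- (Nat.add_1_r j), <- (Nat.add_1_r (j mod n)); apply Nat.Div0.add_mod_idemp_l. Qed.

(* With all buds pointing to the root, an infinite path returns to the root infinitely often; if
   every step off the cycle [addr 0 = [], ..., addr (n-1)] enters a bud-free subtree, the path
   eventually runs around the cycle forever and inherits its trace. *)
Lemma cycle_global_condition t n (addr : nat -> list nat) (dir : nat -> nat) (tau : nat -> formula) :
  0 < n -> addr 0 = [] ->
  (forall m k b, m < n -> edge t (fun _ => []) (addr m) k b ->
     k = dir m /\ b = addr (S m mod n) \/ exists x, subtree_at t b = Some x /\ no_buds x) ->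
  (forall m, m < n -> trace_edge t (addr m) (dir m) (addr (S m mod n)) (tau m) (tau (S m mod n))) ->
  (exists s r ts, subtree_at t [] = Some (PNode s r ts) /\ progress r (dir 0) (tau 0) (tau (1 mod n))) ->
  global_condition t (fun _ => []).
Proof.
  intros Hn Haddr0 Hedge Htrace Hprog v k Hpath.
  destruct (inf_path_visits_root t v k Hpath 0) as (N & _ & HN).
  assert (Hstep : forall j, v (N + j) = addr (j mod n) ->
                   k (N + j) = dir (j mod n) /\ v (S (N + j)) = addr (S j mod n)).
  { intros j Hj; pose proof (Hpath (N + j)) as He; rewrite Hj in He.
    destruct (Hedge _ _ _ (Nat.mod_upper_bound j n ltac:(lia)) He) as [[Hk Hb] | (x & Hx & Hnb)].
    - rewrite succ_mod in Hb; auto.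
    - destruct (inf_path_avoids_bud_free _ _ _ _ Hpath _ _ Hx Hnb). }
  assert (Hcycle : forall j, v (N + j) = addr (j mod n)).
  { induction j as [| j IH].
    - rewrite Nat.add_0_r, Nat.Div0.mod_0_l, Haddr0; exact HN.
    - rewrite Nat.add_succ_r; exact (proj2 (Hstep j IH)). }
  exists N, (fun i => tau ((i - N) mod n)); split.
  - intros i Hi; replace i with (N + (i - N)) by lia; set (j := i - N).
    destruct (Hstep j (Hcycle j)) as [Hk Hb].
    replace (N + j - N) with j by lia; replace (S (N + j) - N) with (S j) by lia.
    rewrite Hcycle, Hk, Hb, <- succ_mod; exact (Htrace _ (Nat.mod_upper_bound j n ltac:(lia))).
  - intros i; exists (N + i * n); split; [nia |].
    destruct (Hstep (i * n) (Hcycle (i * n))) as [Hk _].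
    rewrite Hcycle, Hk, Nat.Div0.mod_mul, Haddr0.
    replace (N + i * n - N) with (i * n) by lia; replace (S (N + i * n) - N) with (S (i * n)) by lia.
    rewrite <- succ_mod, Nat.Div0.mod_mul; exact Hprog.
Qed.

Lemma dependent_choice_path {A : Type} (P : A -> Prop) (E : A -> nat -> A -> Prop) :
  (forall a, P a -> exists k b, E a k b /\ P b) -> forall a0, P a0 ->
  exists (v : nat -> A) (k : nat -> nat), forall i, P (v i) /\ E (v i) (k i) (v (S i)).
Proof.
  intros Hstep a0 H0.
  destruct (choice (fun (x : {a | P a}) (y : nat * {a | P a}) =>
                      E (proj1_sig x) (fst y) (proj1_sig (snd y)))) as [f Hf].
  { intros [a Ha]; destruct (Hstep a Ha) as (k & b & Hab & Hb); exists (k, exist _ b Hb); exact Hab. }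
  set (u := fun i => Nat.iter i (fun x => snd (f x)) (exist _ a0 H0)).
  exists (fun i => proj1_sig (u i)), (fun i => fst (f (u i))).
  intros i; split; [exact (proj2_sig (u i)) | exact (Hf (u i))].
Qed.

Definition locally_ok (ok : sequent -> rlabel -> Prop) (t : ptree) : Prop :=
  forall a s r ts, subtree_at t a = Some (PNode s r ts) -> ok s r /\ inst r (map root_seq ts) s.

Definition closed_backwards (ok : sequent -> rlabel -> Prop) (Bad : sequent -> Prop) : Prop :=
  forall c r ps, Bad c -> ok c r -> inst r ps c -> exists p, In p ps /\ Bad p.

Definition seqeq_invariant (Bad : sequent -> Prop) : Prop :=
  forall S S', seqeq S S' -> Bad S -> Bad S'.

Lemma locally_ok_cut_free allowed t :
  locally_correct allowed t -> cut_free t -> locally_ok (fun _ r => ~ is_cut r) t.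
Proof. intros Hlc Hcf a s r ts Ha; split; [exact (Hcf a s r ts Ha) | exact (proj2 (Hlc a s r ts Ha))]. Qed.

Definition FL_cut_at (c : sequent) (r : rlabel) : Prop :=
  forall phi, r = RCut phi -> In phi (FLset (fst c ++ snd c)).

Lemma locally_ok_FL_cuts t :
  locally_correct G_rule t -> FL_cuts t -> locally_ok (fun c r => G_rule r /\ FL_cut_at c r) t.
Proof.
  intros Hlc Hfl a s r ts Ha; destruct (Hlc a s r ts Ha) as [HG Hi].
  split; [split; [exact HG | intros phi ->; exact (Hfl a s phi ts Ha)] | exact Hi].
Qed.

Section BadSequents.
Variables (ok : sequent -> rlabel -> Prop) (Bad : sequent -> Prop).
Hypotheses (Hinv : seqeq_invariant Bad) (Hclosed : closed_backwards ok Bad).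

Lemma bad_root_inf_path t comp :
  locally_ok ok t -> companions_ok t comp -> Bad (root_seq t) ->
  exists v k, inf_path t comp v k /\
    forall i, exists s r ts, subtree_at t (v i) = Some (PNode s r ts) /\ Bad s.
Proof.
  intros Hlc Hcomp Hroot.
  set (bad_node := fun a => exists s r ts, subtree_at t a = Some (PNode s r ts) /\ Bad s).
  assert (Hstep : forall a, bad_node a -> exists k b, edge t comp a k b /\ bad_node b).
  { intros a (s & r & ts & Ha & Hs); destruct (Hlc a s r ts Ha) as [Hok Hi].
    destruct (Hclosed _ _ _ Hs Hok Hi) as (p & Hp & Hbad).
    apply in_map_iff in Hp as (c & <- & Hc); destruct (In_nth_error _ _ Hc) as [k Hk].
    pose proof (subtree_at_child _ _ _ _ _ _ _ Ha Hk) as Hak.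
    destruct c as [s' r' ts' | s'].
    - exists k, (a ++ [k]); split; [exists s, r, ts, (PNode s' r' ts') | exists s', r', ts']; auto.
    - destruct (Hcomp _ _ Hak) as (s'' & r'' & ts'' & Hb & Heq).
      exists k, (comp (a ++ [k])); split; [exists s, r, ts, (PBud s') | exists s'', r'', ts'']; eauto. }
  assert (Hroot_node : bad_node []).
  { destruct t as [s r ts | s]; [exists s, r, ts; auto |].
    destruct (Hcomp [] s eq_refl) as (s' & r' & ts' & Hs' & _); destruct (comp []); discriminate. }
  destruct (dependent_choice_path _ _ Hstep [] Hroot_node) as (v & k & Hv).
  exists v, k; split; intros i; apply Hv.
Qed.

Lemma finite_tree_root_not_bad t : no_buds t -> locally_ok ok t -> ~ Bad (root_seq t).
Proof.
  intros Hnb Hlc Hroot.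
  destruct (bad_root_inf_path t (fun _ => []) Hlc (no_buds_companions_ok _ _ Hnb) Hroot)
    as (v & k & Hpath & Hbad).
  destruct (Hbad 0) as (s & r & ts & Hs & _).
  exact (inf_path_avoids_bud_free _ _ _ _ Hpath 0 _ Hs (no_buds_subtree _ _ _ Hnb Hs)).
Qed.

Lemma progress_star_succedent r ps c k tau tau' :
  inst r ps c -> progress r k tau tau' -> exists pi phi, In (FBox (PStar pi) phi) (snd c).
Proof.
  intros Hi Hpr; destruct r; try contradiction.
  destruct ps as [| q0 [| q1 [|]]]; try contradiction.
  destruct Hi as (G & D & [_ HR] & _); exists pi, phi; apply HR; left; reflexivity.
Qed.

Lemma cyclic_tree_root_not_bad t comp :
  (forall S pi phi, Bad S -> ~ In (FBox (PStar pi) phi) (snd S)) ->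
  locally_ok ok t -> companions_ok t comp -> global_condition t comp -> ~ Bad (root_seq t).
Proof.
  intros Hnostar Hlc Hcomp Hgc Hroot.
  destruct (bad_root_inf_path t comp Hlc Hcomp Hroot) as (v & k & Hpath & Hbad).
  destruct (Hgc v k Hpath) as (N & tau & _ & Hprog).
  destruct (Hprog N) as (i & _ & s & r & ts & Hs & Hpr).
  destruct (Hbad i) as (s0 & r0 & ts0 & Hs0 & Hb); rewrite Hs in Hs0; injection Hs0 as <- <- <-.
  destruct (progress_star_succedent _ _ _ _ _ _ (proj2 (Hlc _ _ _ _ Hs)) Hpr) as (pi & phi & Hin).
  exact (Hnostar s pi phi Hb Hin).
Qed.

End BadSequents.

Fixpoint all_nodes (P : sequent -> rlabel -> list ptree -> Prop) (Q : sequent -> Prop) (t : ptree) : Prop :=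
  match t with
  | PNode s r ts =>
      P s r ts /\
      (fix all_trees (l : list ptree) : Prop :=
         match l with [] => True | x :: l' => all_nodes P Q x /\ all_trees l' end) ts
  | PBud s => Q s
  end.

Lemma all_nodes_subtree P Q t a x : all_nodes P Q t -> subtree_at t a = Some x -> all_nodes P Q x.
Proof.
  revert t; induction a as [| k a IH]; intros t Ht Ha; simpl in Ha; [injection Ha as <-; exact Ht |].
  destruct t as [s r ts | s]; [| discriminate].
  destruct (nth_error ts k) as [c |] eqn:Hk; [| discriminate].
  apply (IH c); [| exact Ha]; destruct Ht as [_ Hts]; clear - Hts Hk.
  revert k Hk; induction ts as [| c' ts IHts]; intros [| k] Hk; simpl in Hk; try discriminate.
  - injection Hk as <-; exact (proj1 Hts).
  - exact (IHts (proj2 Hts) k Hk).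
Qed.

Lemma all_nodes_node P Q t a s r ts :
  all_nodes P Q t -> subtree_at t a = Some (PNode s r ts) -> P s r ts.
Proof. intros Ht Ha; exact (proj1 (all_nodes_subtree _ _ _ _ _ Ht Ha)). Qed.

Lemma all_nodes_bud P Q t a s : all_nodes P Q t -> subtree_at t a = Some (PBud s) -> Q s.
Proof. exact (all_nodes_subtree P Q t a (PBud s)). Qed.

Lemma common_rule_G r : common_rule r -> G_rule r.
Proof. destruct r; simpl; tauto. Qed.

Lemma common_rule_C r : common_rule r -> C_rule r.
Proof. destruct r; simpl; tauto. Qed.

Lemma all_nodes_locally_correct (allowed : rlabel -> Prop) Q t :
  all_nodes (fun s r ts => allowed r /\ inst r (map root_seq ts) s) Q t -> locally_correct allowed t.
Proof. intros Ht a s r ts Ha; exact (all_nodes_node _ _ _ _ _ _ _ Ht Ha). Qed.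

Lemma locally_correct_weaken (A B : rlabel -> Prop) t :
  (forall r, A r -> B r) -> locally_correct A t -> locally_correct B t.
Proof. intros HAB Ht a s r ts Ha; destruct (Ht a s r ts Ha); auto. Qed.

Lemma all_nodes_no_buds P t : all_nodes P (fun _ => False) t -> no_buds t.
Proof. intros Ht a s Ha; exact (all_nodes_bud _ _ _ _ _ Ht Ha). Qed.

Lemma all_nodes_companions_root P s r ts :
  all_nodes P (fun s' => seqeq s' s) (PNode s r ts) -> companions_ok (PNode s r ts) (fun _ => []).
Proof. intros Ht a s' Ha; exists s, r, ts; split; [reflexivity | exact (all_nodes_bud _ _ _ _ _ Ht Ha)]. Qed.

Lemma locally_correct_cut_free (allowed : rlabel -> Prop) t :
  (forall r, allowed r -> ~ is_cut r) -> locally_correct allowed t -> cut_free t.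
Proof. intros Hcut Ht a s r ts Ha; exact (Hcut r (proj1 (Ht a s r ts Ha))). Qed.

Ltac solve_seqeq := first [apply seqeq_refl | split; intro; simpl; tauto].

Ltac solve_inst :=
  lazymatch goal with
  | |- exists _ _, _ => eexists _, _; solve_inst
  | |- seqeq _ _ /\ _ => split; [solve_seqeq | solve_inst]
  | |- seqeq _ _ => solve_seqeq
  end.

Ltac solve_node :=
  first [ solve_inst | intros ? ?; simpl in *; tauto | eexists; split; simpl; eauto | simpl; tauto ].

Ltac principal_outside_region Hreg Hi :=
  exfalso; let Hc := fresh "Hc" in
  lazymatch type of Hi with
  | exists _ _, _ => destruct Hi as (? & ? & Hc & _)
  | exists _, _ => destruct Hi as (? & Hc & _)
  end;
  apply (seq_all_seqeq Hc) in Hreg; unfold region in Hreg;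
  rewrite ?seq_all_cons_l, ?seq_all_cons_r in Hreg; simpl in Hreg;
  decompose [and or False] Hreg; discriminate.

Definition edge_true_false (n : nat) (x y : bool) : Prop := x = true /\ y = false.

(* The converse axiom p -> [a]<a^->p, with <a^->p written ~[a^-]~p. *)
Definition alpha : program := PAtom 0.
Definition atom_p : formula := FVar 0.
Definition neg (f : formula) : formula := FImp f FBot.
Definition back_neg_p : formula := FBBox alpha (neg atom_p).
Definition tense_box : formula := FBox alpha (neg back_neg_p).
Definition tense_sequent : sequent := ([atom_p], [tense_box]).

(* Star-freeness keeps cyclic proofs from ever reaching a progress point. *)
Definition tense_bad (S : sequent) : Prop :=
  (region [atom_p] [tense_box] S \/ refutable S) /\ star_free S.

Lemma tense_bad_seqeq : seqeq_invariant tense_bad.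
Proof.
  intros S S' H [[Hreg | Href] Hsf]; (split; [| exact (seq_all_seqeq H Hsf)]).
  - left; exact (seq_all_seqeq H Hreg).
  - right; exact (refutable_seqeq _ _ H Href).
Qed.

Lemma tense_box_premise_refutable G D :
  region [atom_p] [tense_box] (map (FBox alpha) G, D) ->
  refutable (G, neg back_neg_p :: map (FBBox alpha) D).
Proof.
  unfold region; rewrite seq_all_map_l; intros [HG HD].
  exists bool, edge_true_false, (fun _ _ => False), false; unfold refutes.
  rewrite seq_all_cons_r, seq_all_map_r; repeat split.
  - intros H; apply H; intros v _ Hv; exact Hv.
  - intros g Hg; destruct (HG g Hg) as [H | []]; discriminate.
  - intros d Hd H; destruct (HD d Hd) as [<- | []].
    apply (H true (conj eq_refl eq_refl) false (conj eq_refl eq_refl)); intros v _ Hv; exact Hv.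
Qed.

Lemma tense_region_premise r ps c :
  region [atom_p] [tense_box] c -> ~ is_cut r -> inst r ps c ->
  exists q, In q ps /\ (region [atom_p] [tense_box] q \/ refutable q).
Proof.
  intros Hreg Hcut Hi.
  destruct r; destruct ps as [| q1 [| q2 [| q3 ps]]]; simpl in Hi; try contradiction.
  all: try principal_outside_region Hreg Hi.
  - destruct Hi as (phi & H1 & H2); destruct Hreg as [HL HR].
    destruct (HL _ H1) as [<- | []]; destruct (HR _ H2) as [H | []]; discriminate.
  - destruct Hreg as [HL _]; destruct (HL _ Hi) as [H | []]; discriminate.
  - exists q1; split; [now left | left; exact (seq_all_incl (proj1 Hi) (proj2 Hi) Hreg)].
  - destruct (Hcut I).
  - destruct Hi as (G & D & Hc & Hp); apply (seq_all_seqeq Hc) in Hreg.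
    unfold region in Hreg; rewrite seq_all_cons_r in Hreg; destruct Hreg as [[Hb | []] Hreg].
    injection Hb as <- <-; exists q1; split; [now left | right].
    exact (refutable_seqeq _ _ (seqeq_sym Hp) (tense_box_premise_refutable G D Hreg)).
Qed.

Lemma tense_bad_closed : closed_backwards (fun _ r => ~ is_cut r) tense_bad.
Proof.
  intros c r ps [Hc Hsf] Hcut Hi.
  assert (Hq : exists q, In q ps /\ (region [atom_p] [tense_box] q \/ refutable q)).
  { destruct Hc as [Hreg | Href]; [exact (tense_region_premise _ _ _ Hreg Hcut Hi) |].
    destruct (refutable_premise _ _ _ Hi Href) as (q & Hq & Hr); exists q; auto. }
  destruct Hq as (q & Hq & H); exists q; split; [exact Hq |].
  split; [exact H | exact (star_free_premise _ _ _ _ Hi Hcut Hsf Hq)].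
Qed.

Lemma tense_bad_no_star_succedent S pi phi : tense_bad S -> ~ In (FBox (PStar pi) phi) (snd S).
Proof. intros [_ [_ HR]] Hin; discriminate (HR _ Hin). Qed.

Lemma tense_sequent_bad S : seqeq S tense_sequent -> tense_bad S.
Proof.
  intros H; apply (tense_bad_seqeq _ _ (seqeq_sym H)).
  split; [left; split; intros f Hf; exact Hf | split; intros f [<- | []]; reflexivity].
Qed.

Theorem tense_not_G_cutfree_provable : ~ G_cutfree_provable tense_sequent.
Proof.
  intros (t & [Hnb Hlc] & Hcf & Hroot).
  exact (finite_tree_root_not_bad _ _ tense_bad_seqeq tense_bad_closed t Hnb
           (locally_ok_cut_free _ _ Hlc Hcf) (tense_sequent_bad _ Hroot)).
Qed.

Theorem tense_not_C_cutfree_provable : ~ C_cutfree_provable tense_sequent.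
Proof.
  intros (t & comp & (Hlc & Hcomp & Hgc) & Hcf & Hroot).
  exact (cyclic_tree_root_not_bad _ _ tense_bad_seqeq tense_bad_closed t comp tense_bad_no_star_succedent
           (locally_ok_cut_free _ _ Hlc Hcf) Hcomp Hgc (tense_sequent_bad _ Hroot)).
Qed.

Definition tense_proof : ptree :=
  PNode tense_sequent (RCut (neg atom_p))
   [ PNode ([atom_p], [neg atom_p; tense_box]) RWk
       [ PNode ([], [tense_box; neg atom_p]) (RBox alpha (neg back_neg_p))
          [ PNode ([], [neg back_neg_p; back_neg_p]) (RImpR back_neg_p FBot)
             [ PNode ([back_neg_p], [FBot; back_neg_p]) RAx [] ] ] ];
     PNode ([neg atom_p; atom_p], [tense_box]) (RImpL atom_p FBot)
       [ PNode ([atom_p], [atom_p; tense_box]) RAx [];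
         PNode ([FBot; atom_p], [tense_box]) RBot [] ] ].

Lemma tense_proof_correct :
  all_nodes (fun s r ts => common_rule r /\ inst r (map root_seq ts) s) (fun _ => False) tense_proof.
Proof.
  simpl; repeat split.
  all: try solve_node.
  exists [], [neg atom_p]; solve_inst.
Qed.

Lemma tense_proof_G : G_proof tense_proof.
Proof.
  split; [exact (all_nodes_no_buds _ _ tense_proof_correct) |].
  exact (locally_correct_weaken _ _ _ common_rule_G (all_nodes_locally_correct _ _ _ tense_proof_correct)).
Qed.

Lemma tense_proof_C : C_proof tense_proof (fun _ => []).
Proof.
  pose proof (all_nodes_no_buds _ _ tense_proof_correct) as Hnb.
  split; [| split; [exact (no_buds_companions_ok _ _ Hnb) | exact (no_buds_global_condition _ _ Hnb)]].
  exact (locally_correct_weaken _ _ _ common_rule_C (all_nodes_locally_correct _ _ _ tense_proof_correct)).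
Qed.

Definition atom_q : formula := FVar 1.
Definition atom_r : formula := FVar 2.
Definition alpha2 : program := PSeq alpha alpha.
Definition even_q : formula := FBox (PStar alpha2) atom_q.
Definition even_next_r : formula := FBox (PStar alpha2) (FBox alpha atom_r).
Definition q_or_r : formula := FImp (neg atom_q) atom_r.
Definition always_q_or_r : formula := FBox (PStar alpha) q_or_r.
Definition parity_sequent : sequent := ([even_q; even_next_r], [always_q_or_r]).

Definition box2_even_q : formula := FBox alpha2 even_q.
Definition box_box_even_q : formula := FBox alpha (FBox alpha even_q).
Definition box_even_q : formula := FBox alpha even_q.
Definition box2_even_next_r : formula := FBox alpha2 even_next_r.
Definition box_box_even_next_r : formula := FBox alpha (FBox alpha even_next_r).
Definition box_even_next_r : formula := FBox alpha even_next_r.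
Definition box_r : formula := FBox alpha atom_r.
Definition box_always : formula := FBox alpha always_q_or_r.

(* A partition of FL(parity_sequent): read as true/false it is propositionally consistent and
   closed under unfolding, but not modally satisfiable. *)
Definition parity_left : list formula :=
  [even_q; box2_even_q; box_box_even_q; box_even_q; atom_q;
   even_next_r; box2_even_next_r; box_box_even_next_r; box_even_next_r; box_r; box_always; q_or_r].
Definition parity_right : list formula := [atom_r; neg atom_q; FBot; always_q_or_r].

Lemma parity_left_right_disjoint f : In f parity_left -> In f parity_right -> False.
Proof. intros HL HR; simpl in *; decompose [or False] HR; subst; decompose [or False] HL; discriminate. Qed.

Lemma parity_FL_closed f g :
  In f parity_left \/ In f parity_right -> In g (FL f) -> In g parity_left \/ In g parity_right.
Proof.
  intros Hf Hg; simpl in Hf; decompose [or False] Hf; subst; simpl in Hg;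
    decompose [or False] Hg; subst; simpl; tauto.
Qed.

Lemma FLset_parity_region c phi :
  region parity_left parity_right c -> In phi (FLset (fst c ++ snd c)) ->
  In phi parity_left \/ In phi parity_right.
Proof.
  intros [HL HR] Hphi; unfold FLset in Hphi; apply in_flat_map in Hphi as (f & Hf & Hg).
  apply (parity_FL_closed f); [apply in_app_or in Hf as [Hf | Hf]; auto | exact Hg].
Qed.

Definition q_at_true (n : nat) (x : bool) : Prop := n = 1 /\ x = true.

Lemma q_or_r_fails_at_false : ~ sat bool edge_true_false q_at_true false q_or_r.
Proof. intros H; destruct (H (fun '(conj _ E) => diff_false_true E)) as [_ E]; discriminate. Qed.

Lemma parity_box_premise_refutable G D :
  region parity_left parity_right (map (FBox (PStar alpha)) G, D) ->
  refutable (G, q_or_r :: map (FBBox (PStar alpha)) D).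
Proof.
  unfold region; rewrite seq_all_map_l; intros [HG HD].
  exists bool, edge_true_false, q_at_true, false; unfold refutes.
  rewrite seq_all_cons_r, seq_all_map_r; repeat split.
  - exact q_or_r_fails_at_false.
  - intros g Hg; specialize (HG g Hg); simpl in HG; decompose [or False] HG; discriminate.
  - intros d Hd H; specialize (HD d Hd); simpl in HD; decompose [or False] HD; subst.
    + destruct (H false (rt1n_refl _ _ _)) as [_ E]; discriminate.
    + apply (H true (Relation_Operators.rt1n_trans _ _ _ _ _ (conj eq_refl eq_refl) (rt1n_refl _ _ _))).
      split; reflexivity.
    + exact (H false (rt1n_refl _ _ _)).
    + apply q_or_r_fails_at_false, (H false (rt1n_refl _ _ _)), rt1n_refl.
Qed.

Lemma parity_star_right_premise_refutable G :
  region parity_left parity_right (map (FBox (PStar alpha)) G, []) ->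
  refutable (q_or_r :: G, [FBox alpha q_or_r]).
Proof.
  unfold region; rewrite seq_all_map_l; intros [HG _].
  exists bool, edge_true_false, q_at_true, true; unfold refutes.
  rewrite seq_all_cons_l, seq_all_cons_r; split; [| split; [| split]].
  - intros Hnq; destruct (Hnq (conj eq_refl eq_refl)).
  - intros H; exact (q_or_r_fails_at_false (H false (conj eq_refl eq_refl))).
  - intros g Hg; specialize (HG g Hg); simpl in HG; decompose [or False] HG; discriminate.
  - intros f [].
Qed.

Ltac principal_in_list Hx :=
  simpl in Hx; decompose [or False] Hx; try discriminate;
  match goal with E : _ = _ |- _ => injection E; clear E; intros; subst end.

Lemma parity_region_premise r ps c :
  region parity_left parity_right c -> G_rule r -> FL_cut_at c r -> inst r ps c ->
  exists q, In q ps /\ (region parity_left parity_right q \/ refutable q).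
Proof.
  intros Hreg HG Hfl Hi.
  destruct r; destruct ps as [| q1 [| q2 [| q3 ps]]]; simpl in Hi; try contradiction.
  all: try principal_outside_region Hreg Hi.
  - destruct Hi as (phi & H1 & H2); destruct Hreg as [HL HR].
    destruct (parity_left_right_disjoint phi (HL _ H1) (HR _ H2)).
  - destruct Hreg as [HL _]; specialize (HL _ Hi); simpl in HL; decompose [or False] HL; discriminate.
  - destruct Hi as (G & D & Hc & Hp & _); apply (seq_all_seqeq Hc) in Hreg; unfold region in *.
    rewrite seq_all_cons_l in Hreg; destruct Hreg as [Hx Hreg]; principal_in_list Hx.
    exists q1; split; [now left | left; apply (seq_all_seqeq (seqeq_sym Hp))].
    rewrite seq_all_cons_r; split; [simpl; tauto | exact Hreg].
  - destruct Hi as (G & D & Hc & Hp); apply (seq_all_seqeq Hc) in Hreg; unfold region in *.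
    rewrite seq_all_cons_r in Hreg; destruct Hreg as [Hx Hreg]; principal_in_list Hx.
    exists q1; split; [now left | left; apply (seq_all_seqeq (seqeq_sym Hp))].
    rewrite seq_all_cons_l, seq_all_cons_r; split; [simpl; tauto | split; [simpl; tauto | exact Hreg]].
  - exists q1; split; [now left | left; exact (seq_all_incl (proj1 Hi) (proj2 Hi) Hreg)].
  - destruct Hi as (G & D & Hc & Hp1 & Hp2).
    destruct (FLset_parity_region c phi Hreg (Hfl phi eq_refl)) as [Hphi | Hphi];
      apply (seq_all_seqeq Hc) in Hreg.
    + exists q2; split; [simpl; tauto | left; apply (seq_all_seqeq (seqeq_sym Hp2))].
      unfold region; rewrite seq_all_cons_l; auto.
    + exists q1; split; [now left | left; apply (seq_all_seqeq (seqeq_sym Hp1))].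
      unfold region; rewrite seq_all_cons_r; auto.
  - destruct Hi as (G & D & Hc & Hp); apply (seq_all_seqeq Hc) in Hreg; unfold region in *.
    rewrite seq_all_cons_r in Hreg; destruct Hreg as [Hx Hreg]; principal_in_list Hx.
    exists q1; split; [now left | right].
    exact (refutable_seqeq _ _ (seqeq_sym Hp) (parity_box_premise_refutable G D Hreg)).
  - destruct Hi as (G & D & Hc & Hp); apply (seq_all_seqeq Hc) in Hreg; unfold region in *.
    rewrite seq_all_cons_l in Hreg; destruct Hreg as [Hx Hreg]; simpl in Hx.
    exists q1; split; [now left | left; apply (seq_all_seqeq (seqeq_sym Hp))].
    rewrite seq_all_cons_l; split; [| exact Hreg].
    principal_in_list Hx; simpl; tauto.
  - destruct Hi as (G & D & Hc & Hp); apply (seq_all_seqeq Hc) in Hreg; unfold region in *.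
    rewrite seq_all_cons_l in Hreg; destruct Hreg as [Hx Hreg]; simpl in Hx.
    exists q1; split; [now left | left; apply (seq_all_seqeq (seqeq_sym Hp))].
    rewrite !seq_all_cons_l; split; [| split; [| exact Hreg]].
    all: principal_in_list Hx; simpl; tauto.
  - destruct Hi as (G & Hc & Hp); apply (seq_all_seqeq Hc) in Hreg; unfold region in *.
    rewrite seq_all_cons_l, seq_all_cons_r in Hreg; destruct Hreg as [_ [Hx Hreg]]; principal_in_list Hx.
    exists q1; split; [now left | right].
    exact (refutable_seqeq _ _ (seqeq_sym Hp) (parity_star_right_premise_refutable G Hreg)).
Qed.

Definition parity_bad (S : sequent) : Prop := region parity_left parity_right S \/ refutable S.

Lemma parity_bad_seqeq : seqeq_invariant parity_bad.
Proof.
  intros S S' H [Hreg | Href]; [left; exact (seq_all_seqeq H Hreg) | right; exact (refutable_seqeq _ _ H Href)].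
Qed.

Lemma parity_bad_closed : closed_backwards (fun c r => G_rule r /\ FL_cut_at c r) parity_bad.
Proof.
  intros c r ps [Hreg | Href] [HG Hfl] Hi; [exact (parity_region_premise _ _ _ Hreg HG Hfl Hi) |].
  destruct (refutable_premise _ _ _ Hi Href) as (q & Hq & Hr); exists q; split; [exact Hq | right; exact Hr].
Qed.

Lemma parity_sequent_bad S : seqeq S parity_sequent -> parity_bad S.
Proof.
  intros H; apply (parity_bad_seqeq _ _ (seqeq_sym H)); left.
  split; intros f Hf; simpl in Hf; decompose [or False] Hf; subst; simpl; tauto.
Qed.

Theorem parity_not_G_FLcut_provable : ~ G_FLcut_provable parity_sequent.
Proof.
  intros (t & [Hnb Hlc] & Hfl & Hroot).
  exact (finite_tree_root_not_bad _ _ parity_bad_seqeq parity_bad_closed t Hnb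
           (locally_ok_FL_cuts t Hlc Hfl) (parity_sequent_bad _ Hroot)).
Qed.

Theorem parity_not_G_cutfree_provable : ~ G_cutfree_provable parity_sequent.
Proof.
  intros (t & Hg & Hcf & Hroot); apply parity_not_G_FLcut_provable.
  exists t; split; [exact Hg | split; [| exact Hroot]].
  intros a s phi ts Ha; destruct (Hcf a s (RCut phi) ts Ha I).
Qed.

Definition parity_proof : ptree :=
  PNode parity_sequent (RCs alpha q_or_r)
   [ PNode ([even_q; even_next_r], [q_or_r]) (RStarL alpha2 atom_q)
      [ PNode ([atom_q; box2_even_q; even_next_r], [q_or_r]) RWk
         [ PNode ([atom_q], [q_or_r]) (RImpR (neg atom_q) atom_r)
            [ PNode ([neg atom_q; atom_q], [atom_r]) (RImpL atom_q FBot)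
               [ PNode ([atom_q], [atom_q; atom_r]) RAx [];
                 PNode ([FBot; atom_q], [atom_r]) RBot [] ] ] ] ];
     PNode ([even_q; even_next_r], [box_always]) (RStarL alpha2 atom_q)
      [ PNode ([atom_q; box2_even_q; even_next_r], [box_always]) (RStarL alpha2 box_r)
         [ PNode ([box_r; box2_even_next_r; atom_q; box2_even_q], [box_always]) (RSeqL alpha alpha even_q)
            [ PNode ([box_box_even_q; box_r; box2_even_next_r; atom_q], [box_always])
                (RSeqL alpha alpha even_next_r)
               [ PNode ([box_box_even_next_r; box_box_even_q; box_r; atom_q], [box_always]) RWk
                  [ PNode ([box_box_even_q; box_r; box_box_even_next_r], [box_always])
                      (RBox alpha always_q_or_r)
                     [ PNode ([box_even_q; atom_r; box_even_next_r], [always_q_or_r]) (RCs alpha q_or_r)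
                        [ PNode ([box_even_q; atom_r; box_even_next_r], [q_or_r]) RWk
                           [ PNode ([atom_r], [q_or_r]) (RImpR (neg atom_q) atom_r)
                              [ PNode ([neg atom_q; atom_r], [atom_r]) RAx [] ] ];
                          PNode ([box_even_q; atom_r; box_even_next_r], [box_always]) RWk
                           [ PNode ([box_even_q; box_even_next_r], [box_always]) (RBox alpha always_q_or_r)
                              [ PBud parity_sequent ] ] ] ] ] ] ] ] ] ].

Lemma parity_proof_correct :
  all_nodes (fun s r ts => (C_rule r /\ ~ is_cut r) /\ inst r (map root_seq ts) s)
            (fun s => seqeq s parity_sequent) parity_proof.
Proof.
  simpl; repeat split.
  all: try solve_node.
  - exists [atom_q; box2_even_q], [box_always]; solve_inst.
  - exists [box_r; box2_even_next_r; atom_q], [box_always]; solve_inst.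
  - exists [box_box_even_q; box_r; atom_q], [box_always]; solve_inst.
  - exists [box_even_q; atom_r; box_even_next_r], []; solve_inst.
  - exists [even_q; even_next_r], []; solve_inst.
Qed.

(* The root, the spine through the two star unfoldings to the inner (C-s), and back to the bud. *)
Definition parity_cycle (m : nat) : list nat :=
  match m with
  | 0 => []
  | 8 => [1; 0; 0; 0; 0; 0; 0; 1]
  | 9 => [1; 0; 0; 0; 0; 0; 0; 1; 0]
  | S m' => 1 :: repeat 0 m'
  end.

Definition parity_cycle_dir (m : nat) : nat := match m with 0 | 7 => 1 | _ => 0 end.

Definition parity_trace (m : nat) : formula :=
  match m with 0 | 7 => always_q_or_r | _ => box_always end.

Lemma parity_cycle_edges m k b :
  m < 10 -> edge parity_proof (fun _ => []) (parity_cycle m) k b ->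
  k = parity_cycle_dir m /\ b = parity_cycle (S m mod 10) \/
  exists x, subtree_at parity_proof b = Some x /\ no_buds x.
Proof.
  intros Hm (s & r & ts & c & Hs & Hk & Hb).
  do 10 (destruct m as [| m];
    [ simpl in Hs; injection Hs as <- <- <-;
      destruct k as [| [| [| k]]]; simpl in Hk; try discriminate; injection Hk as <-; simpl in Hb; subst b;
      first [ left; split; reflexivity
            | right; eexists; split; [reflexivity | apply (all_nodes_no_buds (fun _ _ _ => True)); simpl; tauto] ]
    | ]).
  lia.
Qed.

Lemma parity_cycle_trace m :
  m < 10 -> trace_edge parity_proof (parity_cycle m) (parity_cycle_dir m) (parity_cycle (S m mod 10))
                       (parity_trace m) (parity_trace (S m mod 10)).
Proof.
  intros Hm.
  do 10 (destruct m as [| m];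
    [ do 6 eexists; split; [reflexivity |]; split; [reflexivity |]; simpl;
      split; [tauto |]; split; [tauto |];
      first [ left; reflexivity | right; split; reflexivity | split; reflexivity ]
    | ]).
  lia.
Qed.

Theorem parity_C_cutfree_provable : C_cutfree_provable parity_sequent.
Proof.
  pose proof (all_nodes_locally_correct _ _ _ parity_proof_correct) as Hlc.
  exists parity_proof, (fun _ => []); split; [split; [| split] | split].
  - exact (locally_correct_weaken _ _ _ (fun r H => proj1 H) Hlc).
  - exact (all_nodes_companions_root _ _ _ _ parity_proof_correct).
  - apply (cycle_global_condition _ 10 parity_cycle parity_cycle_dir parity_trace); auto with arith.
    + exact parity_cycle_edges.
    + exact parity_cycle_trace.
    + do 3 eexists; split; [reflexivity | split; reflexivity].
  - exact (locally_correct_cut_free _ _ (fun r H => proj2 H) Hlc).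
  - exact (seqeq_refl _).
Qed.

Lemma tense_G_provable : G_provable tense_sequent.
Proof. exists tense_proof; split; [exact tense_proof_G | exact (seqeq_refl _)]. Qed.

Lemma tense_C_provable : C_provable tense_sequent.
Proof. exists tense_proof, (fun _ => []); split; [exact tense_proof_C | exact (seqeq_refl _)]. Qed.

Theorem mainTheorem8 :
  ((exists S : sequent, ~ G_cutfree_provable S /\ C_cutfree_provable S) /\
   (exists S : sequent, ~ G_FLcut_provable S /\ C_cutfree_provable S)) /\
  (exists S : sequent,
     G_provable S /\ C_provable S /\ ~ G_cutfree_provable S /\ ~ C_cutfree_provable S).
Proof.
  split; [split |].
  - exists parity_sequent; split; [exact parity_not_G_cutfree_provable | exact parity_C_cutfree_provable].
  - exists parity_sequent; split; [exact parity_not_G_FLcut_provable | exact parity_C_cutfree_provable].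
  - exists tense_sequent; repeat split.
    + exact tense_G_provable.
    + exact tense_C_provable.
    + exact tense_not_G_cutfree_provable.
    + exact tense_not_C_cutfree_provable.
Qed.
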